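(* Let $D$ be a division ring, $R$ a maximal subring of $D$, and $\lambda\in D$. Then $\lambda R\subseteq R\lambda$ if and only if $R\lambda\subseteq \lambda R$ if and only if $\lambda R=R\lambda$.
   Context: All rings are associative unital and subrings share the identity. A maximal subring of a ring $T$ is a proper subring maximal under inclusion among proper subrings of $T$. *)

From HB Require Import structures.
From mathcomp Require Import all_boot all_algebra.
Set Implicit Arguments. Unset Strict Implicit. Unset Printing Implicit Defensive.
Import GRing.Theory.
Local Open Scope ring_scope.

(* A division ring: a (nontrivial) unit ring in which every nonzero element
   is invertible.  MathComp has no bundled noncommutative division ring. *)
Definition is_division_ring (D : unitRingType) : Prop :=
  forall x : D, x != 0 -> x \is a GRing.unit.

Definition subring (T : pzRingType) (S : T -> Prop) : Prop :=
  [/\ S 1,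
      (forall x y, S x -> S y -> S (x - y)) &
      (forall x y, S x -> S y -> S (x * y))].

Definition proper_subring (T : pzRingType) (S : T -> Prop) : Prop :=
  subring S /\ exists x, ~ S x.

Definition maximal_subring (T : pzRingType) (R : T -> Prop) : Prop :=
  proper_subring R /\
  forall S : T -> Prop, proper_subring S -> (forall x, R x -> S x) ->
    forall x, S x -> R x.

Definition lmul_set (T : pzRingType) (l : T) (R : T -> Prop) : T -> Prop :=
  fun x => exists2 r, R r & x = l * r.
Definition rmul_set (T : pzRingType) (R : T -> Prop) (l : T) : T -> Prop :=
  fun x => exists2 r, R r & x = r * l.

Definition set_incl (T : Type) (A B : T -> Prop) : Prop := forall x, A x -> B x.
Definition set_eq (T : Type) (A B : T -> Prop) : Prop := forall x, A x <-> B x.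

(* For a unit [u], conjugation [y |-> u y u^-1] is a ring automorphism, so the
   preimage of a maximal subring [R] under it is again a proper subring.  If
   [u R u^-1 <= R], that preimage contains [R], hence equals [R] by
   maximality, which says [u^-1 R u <= R].  For [l != 0] the inclusions
   [l R <= R l] and [R l <= l R] are exactly [l R l^-1 <= R] and
   [l^-1 R l <= R]; for [l = 0] both sets are [{0}]. *)
From mathcomp Require Import all_boot all_algebra.
Set Implicit Arguments. Unset Strict Implicit. Unset Printing Implicit Defensive.
Import GRing.Theory.
Local Open Scope ring_scope.

Section Conjugation.

Variables (T : unitRingType) (u : T).
Hypothesis u_unit : u \is a GRing.unit.

Definition conj_preimage (R : T -> Prop) : T -> Prop :=
  fun y => R (u * y * u^-1).

Lemma conjK (y : T) : u * (u^-1 * y * u) * u^-1 = y.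
Proof. by rewrite !mulrA mulrV // mul1r mulrK. Qed.

Lemma subring_conj_preimage (R : T -> Prop) :
  subring R -> subring (conj_preimage R).
Proof.
case=> R1 RB RM; split; rewrite /conj_preimage.
- by rewrite mulr1 divrr.
- by move=> x y Rx Ry; rewrite mulrBr mulrBl; apply: RB.
- move=> x y Rx Ry.
  have -> : u * (x * y) * u^-1 = (u * x * u^-1) * (u * y * u^-1).
    by rewrite !mulrA mulrVK.
  exact: RM.
Qed.

Lemma proper_subring_conj_preimage (R : T -> Prop) :
  proper_subring R -> proper_subring (conj_preimage R).
Proof.
case=> sR [x Rx]; split; first exact: subring_conj_preimage.
by exists (u^-1 * x * u); rewrite /conj_preimage conjK.
Qed.

Lemma maximal_subring_conj_inv (R : T -> Prop) :
  maximal_subring R ->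
  (forall r, R r -> R (u * r * u^-1)) -> forall r, R r -> R (u^-1 * r * u).
Proof.
move=> [pR maxR] uRu r Rr.
have := maxR _ (proper_subring_conj_preimage pR) uRu (u^-1 * r * u).
by rewrite /conj_preimage conjK => /(_ Rr).
Qed.

End Conjugation.

Lemma maximal_subring_conj_sym (T : unitRingType) (R : T -> Prop) (u : T) :
  u \is a GRing.unit -> maximal_subring R ->
  (forall r, R r -> R (u * r * u^-1)) <-> (forall r, R r -> R (u^-1 * r * u)).
Proof.
move=> uU maxR; split; first exact: maximal_subring_conj_inv.
have := @maximal_subring_conj_inv T u^-1; rewrite unitrV invrK.
exact.
Qed.

Lemma lmul_incl_rmulE (T : unitRingType) (R : T -> Prop) (l : T) :
  l \is a GRing.unit ->
  set_incl (lmul_set l R) (rmul_set R l) <-> (forall r, R r -> R (l * r * l^-1)).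
Proof.
move=> lU; split=> [lRl r Rr | lRl _ [r Rr ->]].
  by have [r' Rr' ->] := lRl (l * r) (ex_intro2 _ _ r Rr erefl); rewrite mulrK.
by exists (l * r * l^-1); [apply: lRl | rewrite mulrVK].
Qed.

Lemma rmul_incl_lmulE (T : unitRingType) (R : T -> Prop) (l : T) :
  l \is a GRing.unit ->
  set_incl (rmul_set R l) (lmul_set l R) <-> (forall r, R r -> R (l^-1 * r * l)).
Proof.
move=> lU; split=> [Rll r Rr | Rll _ [r Rr ->]].
  have [r' Rr' e] := Rll (r * l) (ex_intro2 _ _ r Rr erefl).
  by rewrite -mulrA e mulKr.
by exists (l^-1 * r * l); [apply: Rll | rewrite !mulrA mulrV // mul1r].
Qed.

Lemma lmul_set0_eq_rmul_set0 (T : pzRingType) (R : T -> Prop) :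
  R 1 -> set_eq (lmul_set 0 R) (rmul_set R 0).
Proof.
by move=> R1 x; split=> -[r _ ->]; exists 1; rewrite ?mul0r ?mulr0.
Qed.

Theorem lemma2p1 (D : unitRingType) (hD : is_division_ring D)
  (R : D -> Prop) (hR : maximal_subring R) (l : D) :
  (set_incl (lmul_set l R) (rmul_set R l) <->
   set_incl (rmul_set R l) (lmul_set l R)) /\
  (set_incl (rmul_set R l) (lmul_set l R) <->
   set_eq (lmul_set l R) (rmul_set R l)).
Proof.
have lRl_iff_Rll : set_incl (lmul_set l R) (rmul_set R l) <->
                   set_incl (rmul_set R l) (lmul_set l R).
  have [-> | l0] := eqVneq l 0.
    have R1 : R 1 by case: hR => [[[]]].
    have e0 := lmul_set0_eq_rmul_set0 R1.
    by split=> _ x /e0.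
  have lU := hD l l0.
  have [lRl_Rll Rll_lRl] := maximal_subring_conj_sym lU hR.
  split=> [/(lmul_incl_rmulE R lU)/lRl_Rll/(rmul_incl_lmulE R lU) |
           /(rmul_incl_lmulE R lU)/Rll_lRl/(lmul_incl_rmulE R lU)] //.
split=> //; split=> [Rll x | lR_eq x /lR_eq //].
by split; [apply: (proj2 lRl_iff_Rll) | apply: Rll].
Qed.
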